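(* Let $V\geq 0$ be a nonsingular potential on $(-\infty,0]$ (as defined in the context). Let $\gamma_c>0$ be the critical value such that ${}^{\gamma}\mathcal{H}$ (with $\gamma>0$) has a negative eigenvalue exactly when $\gamma>\gamma_c$, and for $\gamma>\gamma_c$ let $E_\gamma<0$ denote this (unique) negative eigenvalue. Assume that $\lim_{\gamma\to\gamma_c^+}E_\gamma=0$. Then $$\gamma_c\leq\int_{-\infty}^0 V(x)\,dx.$$
   Context: A potential $V$ is called nonsingular if: $V$ is continuous on $(-\infty,0]$; as $x\to-\infty$ it decays exponentially, $V(x)=e^{\kappa x}\,(U+O(e^{\kappa x}))$ for some constants $\kappa>0$, $U\neq 0$; and near $x=0$ it has an expansion $V(x)=v_0+v_1x+v_2x^2+\dots$ with $v_0\neq 0$. For $\mathcal{H}=-\frac{d^2}{dx^2}+V(x)$ on $x<0$ in $L^2((-\infty,0),dx)$ and real $\gamma\neq0$, ${}^{\gamma}\mathcal{H}$ is the self-adjoint realization with Robin boundary condition $\psi'(0)=\gamma\psi(0)$. *)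

From Stdlib Require Import Reals.
From Coquelicot Require Import Coquelicot.
Open Scope R_scope.

Definition poly_partial (v : nat -> R) (N : nat) (x : R) : R :=
  sum_f_R0 (fun k => v k * x ^ k) N.

(* Nonsingular potential on (-oo,0] (only the values V x with x <= 0 matter). *)
Definition nonsingular (V : R -> R) : Prop :=
  (forall x, x <= 0 ->
     filterlim V (within (fun y => y <= 0) (locally x)) (locally (V x))) /\
  (exists kappa U C x0, 0 < kappa /\ U <> 0 /\
     forall x, x <= x0 ->
       Rabs (V x - exp (kappa * x) * U) <= C * exp (kappa * x) * exp (kappa * x)) /\
  (exists v : nat -> R, v 0%nat <> 0 /\
     forall N : nat, exists C delta, 0 < delta /\
       forall x, -delta <= x <= 0 ->
         Rabs (V x - poly_partial v N x) <= C * Rabs x ^ (S N)).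

(* E is an eigenvalue of the Robin realization  gamma H = -d^2/dx^2 + V on
   L^2((-oo,0)) with boundary condition psi'(0) = gamma psi(0):
   there is a nonzero square-integrable classical solution of
   -psi'' + V psi = E psi on (-oo,0) satisfying the boundary condition. *)
Definition robin_eigenvalue (V : R -> R) (gamma E : R) : Prop :=
  exists psi dpsi : R -> R,
    (forall x, x <= 0 -> is_derive psi x (dpsi x)) /\
    (forall x, x < 0 -> is_derive dpsi x ((V x - E) * psi x)) /\
    dpsi 0 = gamma * psi 0 /\
    ex_RInt_gen (fun x => psi x ^ 2) (Rbar_locally m_infty) (at_point 0) /\
    (exists x, x < 0 /\ psi x <> 0).

From Stdlib Require Import Reals Lra Classical.
From Coquelicot Require Import Coquelicot.
Open Scope R_scope.

(* Let I = int V and m(x) = int_x^0 V, so that 0 <= m <= I and m' = -V. For gamma > gamma_c write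
   E_gamma = -k^2 and take an eigenfunction psi with psi(0) > 0. The quotient psi'/psi solves the
   Riccati equation w' = V + k^2 - w^2, so any g >= 0 with V + k^2 <= g' + g^2 is a barrier: the
   conditions psi' > 0 and psi' > g psi propagate leftwards. If psi'(X) > c psi(X) > 0 for some
   c > I + k, the barrier I + k - m gives psi' > 0 on (-oo, X], hence psi > 0 there because psi^2
   is integrable; the barrier I + k - m(x) + 1/(x - s), which blows up at some s < X, then gives
   psi'(x) (x - s) > psi(s) > 0 as x -> s+, which is absurd. Hence psi'/psi <= I + k near 0, that
   is gamma <= I + sqrt(-E_gamma), and letting gamma -> gamma_c+ gives gamma_c <= I. *)

Lemma is_derive_nonneg_le (f df : R -> R) (a b : R) : a <= b ->
  (forall x, a <= x <= b -> is_derive f x (df x)) ->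
  (forall x, a <= x <= b -> 0 <= df x) -> f a <= f b.
Proof.
  intros [hab| <-] Df df_ge0; [|lra].
  destruct (MVT_cor2 f df a b hab) as [c [Hc hc]].
  - intros c hc; apply is_derive_Reals, Df; exact hc.
  - assert (0 <= df c) by (apply df_ge0; lra). nra.
Qed.

Lemma is_derive_pos_lt (f df : R -> R) (a b : R) : a < b ->
  (forall x, a <= x <= b -> is_derive f x (df x)) ->
  (forall x, a <= x <= b -> 0 < df x) -> f a < f b.
Proof.
  intros hab Df df_gt0.
  apply (incr_function_le f a b df); simpl; try lra.
  - intros x hax hxb; apply Df; split; assumption.
  - intros x hax hxb; apply df_gt0; split; assumption.
Qed.

Lemma is_derive_continuous (f : R -> R) (x l : R) : is_derive f x l -> continuous f x.
Proof. intros Df; apply (ex_derive_continuous (V := R_NormedModule)); exists l; exact Df. Qed.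

Lemma continuous_locally_lt (f g : R -> R) (x : R) :
  continuous f x -> continuous g x -> f x < g x -> locally x (fun y => f y < g y).
Proof.
  intros Cf Cg hlt.
  assert (Cgf : continuous (fun y => g y - f y) x) by (apply (continuous_minus g f); assumption).
  apply (filter_imp (fun y => 0 < g y - f y)); [intros y; lra|].
  apply Cgf, (open_gt 0); simpl; lra.
Qed.

Lemma continuous_ge_right (f : R -> R) (a b c : R) : continuous f a -> a < b ->
  (forall t, a < t < b -> c <= f t) -> c <= f a.
Proof.
  intros Cf hab Hf.
  apply (filterlim_le (F := at_right a) (fun _ => c) f c (f a)).
  - exists (mkposreal (b - a) ltac:(lra)); intros t Ht hat; apply Hf.
    apply Rabs_def2 in Ht; unfold minus, plus, opp in Ht; simpl in Ht; lra.
  - apply filterlim_const.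
  - intros P HP; apply Cf in HP.
    apply (filter_imp _ _ (fun y HPy _ => HPy)); exact HP.
Qed.

Lemma real_induction_left (P : R -> Prop) (a X : R) :
  P X ->
  (forall t, a <= t < X -> (forall s, t < s <= X -> P s) -> P t) ->
  (forall t, a <= t <= X -> P t -> locally t P) ->
  forall t, a <= t <= X -> P t.
Proof.
  intros PX closed open t ht.
  apply NNPP; intros nPt.
  set (E := fun s => a <= s <= X /\ ~ P s).
  destruct (completeness E) as [b [ub_b lub_b]].
  - exists X; intros s [hs _]; lra.
  - exists t; split; assumption.
  assert (htb : t <= b) by (apply ub_b; split; assumption).
  assert (hbX : b <= X) by (apply lub_b; intros s [hs _]; lra).
  assert (P_right : forall s, b < s <= X -> P s).
  { intros s hs; apply NNPP; intros nPs.
    assert (s <= b) by (apply ub_b; split; [lra|assumption]); lra. }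
  assert (Pb : P b).
  { destruct (Req_dec b X) as [-> | hbX']; [assumption|].
    apply closed; [lra|exact P_right]. }
  destruct (open b ltac:(lra) Pb) as [eps Heps].
  assert (b <= b - eps / 2); [|pose proof (cond_pos eps); lra].
  apply lub_b; intros s [hs nPs].
  assert (hsb : s <= b) by (apply ub_b; split; assumption).
  destruct (Rle_or_lt s (b - eps / 2)) as [h|h]; [assumption|].
  exfalso; apply nPs, Heps.
  apply Rabs_def1; unfold minus, plus, opp; simpl; pose proof (cond_pos eps); lra.
Qed.

Section RiccatiComparison.
Variables (q g dg psi dpsi : R -> R) (a X : R).
Hypotheses (psi_deriv : forall x, a <= x <= X -> is_derive psi x (dpsi x))
  (dpsi_deriv : forall x, a <= x <= X -> is_derive dpsi x (q x * psi x))
  (g_deriv : forall x, a <= x <= X -> is_derive g x (dg x))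
  (q_pos : forall x, a <= x <= X -> 0 < q x)
  (g_ge0 : forall x, a <= x <= X -> 0 <= g x)
  (riccati : forall x, a <= x <= X -> q x <= dg x + g x ^ 2).

Lemma is_derive_g_psi x : a <= x <= X ->
  is_derive (fun y => g y * psi y) x (dg x * psi x + g x * dpsi x).
Proof.
  intros hx; apply (is_derive_mult g psi); [apply g_deriv | apply psi_deriv | ]; auto.
  intros; apply Rmult_comm.
Qed.

Lemma continuous_g_psi x : a <= x <= X -> continuous (fun y => g y * psi y) x.
Proof. intros hx; exact (is_derive_continuous _ _ _ (is_derive_g_psi x hx)). Qed.

Lemma continuous_dpsi x : a <= x <= X -> continuous dpsi x.
Proof. intros hx; exact (is_derive_continuous _ _ _ (dpsi_deriv x hx)). Qed.

(* If psi' vanished at t, then psi'' = q psi < 0 would make psi' negative just right of t. *)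
Lemma dpsi_pos_of_psi_neg t : a <= t < X -> psi t < 0 -> 0 <= dpsi t ->
  (forall s, t < s <= X -> 0 < dpsi s) -> 0 < dpsi t.
Proof.
  intros ht psi_neg [dpsi_pos | dpsi0] dpsi_right; [exact dpsi_pos|].
  assert (Cpsi : continuous psi t) by exact (is_derive_continuous _ _ _ (psi_deriv t ltac:(lra))).
  destruct (continuous_locally_lt psi (fun _ => 0) t Cpsi (continuous_const _ _) psi_neg)
    as [eps Heps].
  set (s := t + Rmin (eps / 2) ((X - t) / 2)).
  assert (Rmin (eps / 2) ((X - t) / 2) <= eps / 2) by apply Rmin_l.
  assert (Rmin (eps / 2) ((X - t) / 2) <= (X - t) / 2) by apply Rmin_r.
  assert (0 < Rmin (eps / 2) ((X - t) / 2)) by (apply Rmin_pos; pose proof (cond_pos eps); lra).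
  assert (- dpsi t < - dpsi s); [|specialize (dpsi_right s ltac:(unfold s; lra)); lra].
  apply (is_derive_pos_lt (fun y => - dpsi y) (fun y => - (q y * psi y))); [unfold s; lra| |].
  - intros y hy; apply (is_derive_opp dpsi), dpsi_deriv; unfold s in hy; lra.
  - intros y hy.
    assert (psi y < 0).
    { apply Heps, Rabs_def1; unfold minus, plus, opp; simpl; unfold s in hy; lra. }
    assert (0 < q y) by (apply q_pos; unfold s in hy; lra).
    nra.
Qed.

(* S = psi' - g psi satisfies S' = (q - g' - g^2) psi - g S <= 0 while S, psi >= 0. *)
Lemma riccati_defect_le t : a <= t < X -> 0 <= psi t -> 0 <= dpsi t ->
  0 <= dpsi t - g t * psi t ->
  (forall s, t < s <= X -> 0 < dpsi s /\ g s * psi s < dpsi s) ->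
  dpsi X - g X * psi X <= dpsi t - g t * psi t.
Proof.
  intros ht psi_t dpsi_t S_t Hright.
  assert (psi_right : forall s, t <= s <= X -> 0 <= psi s).
  { intros s hs.
    enough (psi t <= psi s) by lra.
    apply (is_derive_nonneg_le psi dpsi); [lra | intros y hy; apply psi_deriv; lra |].
    intros y hy; destruct (Req_dec y t) as [-> | hyt]; [lra|].
    destruct (Hright y ltac:(lra)); lra. }
  enough (- (dpsi t - g t * psi t) <= - (dpsi X - g X * psi X)) by lra.
  apply (is_derive_nonneg_le (fun y => - (dpsi y - g y * psi y))
           (fun y => - (q y * psi y - (dg y * psi y + g y * dpsi y)))); [lra| |].
  - intros y hy.
    apply (is_derive_opp (fun y => dpsi y - g y * psi y)),
      (is_derive_minus dpsi (fun y => g y * psi y));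
      [apply dpsi_deriv | apply is_derive_g_psi]; lra.
  - intros y hy.
    assert (S_y : 0 <= dpsi y - g y * psi y).
    { destruct (Req_dec y t) as [-> | hyt]; [lra|].
      destruct (Hright y ltac:(lra)); lra. }
    assert (psi_y := psi_right y hy).
    assert (g_y := g_ge0 y ltac:(lra)).
    assert (R_y := riccati y ltac:(lra)).
    replace (q y * psi y - (dg y * psi y + g y * dpsi y))
      with ((q y - dg y - g y ^ 2) * psi y - g y * (dpsi y - g y * psi y)) by ring.
    assert ((q y - dg y - g y ^ 2) * psi y <= 0) by (apply Rmult_le_0_r; lra).
    assert (0 <= g y * (dpsi y - g y * psi y)) by (apply Rmult_le_pos; lra).
    lra.
Qed.

Lemma riccati_comparison : 0 < dpsi X -> g X * psi X < dpsi X ->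
  forall x, a <= x <= X -> 0 < dpsi x /\ g x * psi x < dpsi x.
Proof.
  intros dpsiX_pos gpsiX_lt.
  apply real_induction_left; [split; assumption| |].
  - intros t ht Hright.
    assert (dpsi_t : 0 <= dpsi t).
    { apply (continuous_ge_right dpsi t X); [apply continuous_dpsi; lra | lra |].
      intros s hs; destruct (Hright s ltac:(lra)); lra. }
    assert (S_t : 0 <= dpsi t - g t * psi t).
    { apply (continuous_ge_right (fun y => dpsi y - g y * psi y) t X); [| lra |].
      - apply (continuous_minus dpsi (fun y => g y * psi y));
          [apply continuous_dpsi | apply continuous_g_psi]; lra.
      - intros s hs; destruct (Hright s ltac:(lra)); lra. }
    assert (g_t := g_ge0 t ltac:(lra)).
    destruct (Rlt_or_le (psi t) 0) as [psi_t | psi_t].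
    + assert (0 < dpsi t) by (apply dpsi_pos_of_psi_neg; auto; intros s hs; apply Hright, hs).
      split; nra.
    + pose proof (riccati_defect_le t ht psi_t dpsi_t S_t Hright).
      assert (0 <= g t * psi t) by (apply Rmult_le_pos; lra).
      split; lra.
  - intros t ht [dpsi_t S_t].
    apply filter_and.
    + apply (continuous_locally_lt (fun _ => 0) dpsi t (continuous_const _ _));
        [apply continuous_dpsi|]; assumption.
    + apply continuous_locally_lt; [apply continuous_g_psi | apply continuous_dpsi |]; assumption.
Qed.

End RiccatiComparison.

Lemma ex_RInt_gen_not_ge_left (f : R -> R) (x0 c : R) :
  ex_RInt_gen f (Rbar_locally m_infty) (at_point 0) -> 0 < c ->
  ~ (forall x, x <= x0 -> c <= f x).
Proof.
  intros [l Hl] hc f_ge.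
  destruct (Hl _ (locally_ball l (mkposreal 1 Rlt_0_1))) as [Q P [M HM] HP HQP].
  set (b := Rmin (Rmin x0 (-1)) M - 1).
  set (a := b - 3 / c).
  assert (b <= x0 - 1 /\ b <= -2 /\ b < M) as [hb1 [hb2 hb3]].
  { unfold b; pose proof (Rmin_l (Rmin x0 (-1)) M); pose proof (Rmin_r (Rmin x0 (-1)) M);
    pose proof (Rmin_l x0 (-1)); pose proof (Rmin_r x0 (-1)); lra. }
  assert (hab : a < b) by (unfold a; assert (0 < 3 / c) by (apply Rdiv_lt_0_compat; lra); lra).
  destruct (HQP a 0 (HM a ltac:(lra)) HP) as [ya [Ha Hya]].
  destruct (HQP b 0 (HM b ltac:(lra)) HP) as [yb [Hb Hyb]].
  simpl in Ha, Hb.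
  pose proof (is_RInt_Chasles_1 f a b 0 ya yb ltac:(lra) Ha Hb) as Hab.
  assert (scal (b - a) c <= minus ya yb).
  { apply (is_RInt_le (fun _ => c) f a b (scal (b - a) c));
      [lra | apply (is_RInt_const (V := R_NormedModule)) | exact Hab |].
    intros x hx; apply f_ge; lra. }
  assert (e : (b - a) * c = 3) by (unfold a; field; lra).
  apply Rabs_def2 in Hya; apply Rabs_def2 in Hyb.
  unfold scal, minus, plus, opp, mult in *; simpl in *; unfold mult in *; simpl in *; lra.
Qed.

Lemma pos_of_derive_pos_ex_RInt_gen (psi dpsi : R -> R) (X : R) :
  (forall x, x <= X -> is_derive psi x (dpsi x)) ->
  (forall x, x <= X -> 0 < dpsi x) ->
  ex_RInt_gen (fun x => psi x ^ 2) (Rbar_locally m_infty) (at_point 0) ->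
  forall x, x <= X -> 0 < psi x.
Proof.
  intros psi_deriv dpsi_pos psi_L2 x hx.
  apply Rnot_le_lt; intros psi_le0.
  assert (psi_lt : forall y z, y < z <= X -> psi y < psi z).
  { intros y z hyz; apply (is_derive_pos_lt psi dpsi); [lra | |];
      intros t ht; [apply psi_deriv | apply dpsi_pos]; lra. }
  assert (psi_neg : psi (x - 1) < 0) by (pose proof (psi_lt (x - 1) x ltac:(lra)); lra).
  apply (ex_RInt_gen_not_ge_left _ (x - 1) (psi (x - 1) ^ 2) psi_L2); [nra|].
  intros y hy.
  assert (psi y <= psi (x - 1)).
  { destruct (Req_dec y (x - 1)) as [-> | hne]; [lra|].
    left; apply psi_lt; lra. }
  nra.
Qed.

Lemma derive_pos_left_approx (h dh : R -> R) (eps : R) :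
  (forall x, x <= 0 -> is_derive h x (dh x)) -> 0 < dh 0 -> 0 < eps ->
  exists X, - eps < X < 0 /\ 0 < dh X.
Proof.
  intros h_deriv dh0_pos heps.
  destruct (proj1 (is_derive_Reals h 0 (dh 0)) (h_deriv 0 (Rle_refl 0)) (dh 0 / 2))
    as [delta Hdelta]; [lra|].
  set (x := - Rmin delta eps / 2).
  assert (0 < Rmin delta eps) by (apply Rmin_pos; [apply cond_pos | lra]).
  assert (Rmin delta eps <= eps) by apply Rmin_r.
  assert (Rmin delta eps <= delta) by apply Rmin_l.
  assert (h_drop : h x < h 0).
  { specialize (Hdelta x ltac:(unfold x; lra) ltac:(rewrite Rabs_left; unfold x; lra)).
    rewrite Rplus_0_l in Hdelta; apply Rabs_def2 in Hdelta.
    assert (0 < (h x - h 0) / x) by lra.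
    assert (e : h x - h 0 = (h x - h 0) / x * x) by (field; unfold x; lra).
    assert ((h x - h 0) / x * x < 0) by (apply Rmult_pos_neg; [| unfold x]; lra).
    lra. }
  destruct (MVT_cor2 h dh x 0) as [X [HX hX]]; [unfold x; lra | |].
  - intros y hy; apply is_derive_Reals, h_deriv; lra.
  - exists X; split; [unfold x in hX; lra|].
    apply Rmult_lt_reg_r with (0 - x); [lra|]; lra.
Qed.

Lemma exists_left_slope_gt (psi dpsi : R -> R) (c : R) :
  (forall x, x <= 0 -> is_derive psi x (dpsi x)) ->
  0 < psi 0 -> c * psi 0 < dpsi 0 ->
  exists X, X < 0 /\ 0 < psi X /\ c * psi X < dpsi X.
Proof.
  intros psi_deriv psi0_pos slope0.
  destruct (continuous_locally_lt (fun _ => 0) psi 0 (continuous_const _ _)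
              (is_derive_continuous _ _ _ (psi_deriv 0 (Rle_refl 0))) psi0_pos) as [eps Heps].
  (* d/dx (psi(x) e^{-cx}) has the sign of psi' - c psi. *)
  destruct (derive_pos_left_approx (fun x => psi x * exp (- c * x))
              (fun x => (dpsi x - c * psi x) * exp (- c * x)) eps) as [X [hX dX_pos]].
  - intros x hx.
    replace ((dpsi x - c * psi x) * exp (- c * x))
      with (dpsi x * exp (- c * x) + psi x * (- c * exp (- c * x))) by ring.
    apply (is_derive_mult psi (fun x => exp (- c * x))); [apply psi_deriv, hx | |].
    + auto_derive; [exact I | ring].
    + intros; apply Rmult_comm.
  - assert (0 < exp (- c * 0)) by apply exp_pos. nra.
  - exact (cond_pos eps).
  - exists X; split; [lra|]; split.
    + apply Heps, Rabs_def1; unfold minus, plus, opp; simpl; lra.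
    + assert (0 < exp (- c * X)) by apply exp_pos. nra.
Qed.

Section DecayingSolution.
Variables (V0 m psi dpsi : R -> R) (I k : R).
Hypotheses (V0_ge0 : forall x, 0 <= V0 x)
  (m_deriv : forall x, is_derive m x (- V0 x))
  (m_bounds : forall x, x <= 0 -> 0 <= m x <= I)
  (k_pos : 0 < k)
  (psi_deriv : forall x, x <= 0 -> is_derive psi x (dpsi x))
  (dpsi_deriv : forall x, x < 0 -> is_derive dpsi x ((V0 x + k ^ 2) * psi x))
  (psi_L2 : ex_RInt_gen (fun x => psi x ^ 2) (Rbar_locally m_infty) (at_point 0)).

Lemma is_derive_Ik_sub_m x : is_derive (fun y => I + k - m y) x (V0 x).
Proof.
  replace (V0 x) with (0 - - V0 x) by ring.
  apply (is_derive_minus (fun _ => I + k) m); [| apply m_deriv].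
  apply (is_derive_const (K := R_AbsRing) (V := R_NormedModule)).
Qed.

Lemma dpsi_pos_left (X : R) : X < 0 -> 0 < psi X -> (I + k) * psi X < dpsi X ->
  forall x, x <= X -> 0 < dpsi x.
Proof.
  intros hX psiX_pos slopeX x hx.
  refine (proj1 (riccati_comparison (fun y => V0 y + k ^ 2) (fun y => I + k - m y) V0
                   psi dpsi x X _ _ _ _ _ _ _ _ x _)); try lra.
  - intros y hy; apply psi_deriv; lra.
  - intros y hy; apply dpsi_deriv; lra.
  - intros y hy; apply is_derive_Ik_sub_m.
  - intros y hy; pose proof (V0_ge0 y); nra.
  - intros y hy; destruct (m_bounds y ltac:(lra)); lra.
  - intros y hy; destruct (m_bounds y ltac:(lra)).
    assert (k ^ 2 <= (I + k - m y) ^ 2) by (apply pow_incr; lra); lra.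
  - destruct (m_bounds X ltac:(lra)); nra.
  - destruct (m_bounds X ltac:(lra)); nra.
Qed.

Lemma blowup_lower_bound (X s : R) : X < 0 -> s < X -> 0 < psi X ->
  (I + k + / (X - s)) * psi X < dpsi X ->
  forall x, s < x <= X -> psi x < dpsi x * (x - s).
Proof.
  intros hX hsX psiX_pos slopeX x hx.
  assert (I_ge0 : 0 <= I) by (destruct (m_bounds X ltac:(lra)); lra).
  assert (0 < / (X - s)) by (apply Rinv_0_lt_compat; lra).
  set (g := fun y => I + k - m y + / (y - s)).
  assert (g_ge : forall y, s < y <= X -> / (y - s) <= g y).
  { intros y hy; destruct (m_bounds y ltac:(lra)); unfold g; lra. }
  assert (gX_le : g X <= I + k + / (X - s)) by (destruct (m_bounds X ltac:(lra)); unfold g; lra).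
  assert (gpsi_lt : g x * psi x < dpsi x).
  { refine (proj2 (riccati_comparison (fun y => V0 y + k ^ 2) g
              (fun y => V0 y - / (y - s) ^ 2) psi dpsi x X _ _ _ _ _ _ _ _ x _)); try lra.
    - intros y hy; apply psi_deriv; lra.
    - intros y hy; apply dpsi_deriv; lra.
    - intros y hy.
      replace (V0 y - / (y - s) ^ 2) with (V0 y + - / (y - s) ^ 2) by ring.
      apply (is_derive_plus (fun y => I + k - m y)); [apply is_derive_Ik_sub_m|].
      auto_derive; [lra | field; lra].
    - intros y hy; pose proof (V0_ge0 y); nra.
    - intros y hy; pose proof (g_ge y ltac:(lra)).
      assert (0 < / (y - s)) by (apply Rinv_0_lt_compat; lra); lra.
    - intros y hy; destruct (m_bounds y ltac:(lra)); unfold g.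
      assert (0 < / (y - s)) by (apply Rinv_0_lt_compat; lra).
      replace (/ (y - s) ^ 2) with (/ (y - s) * / (y - s)) by (field; lra).
      assert (k ^ 2 <= (I + k - m y) ^ 2) by (apply pow_incr; lra).
      assert (0 <= (I + k - m y) * / (y - s)) by (apply Rmult_le_pos; lra).
      nra.
    - nra.
    - nra. }
  assert (psi_x : 0 < psi x).
  { apply (pos_of_derive_pos_ex_RInt_gen psi dpsi X);
      [intros y hy; apply psi_deriv; lra | | exact psi_L2 | lra].
    apply dpsi_pos_left; [lra | assumption | nra]. }
  assert (lt_inv : psi x * / (x - s) < dpsi x) by (pose proof (g_ge x hx); nra).
  apply (Rmult_lt_compat_r (x - s)) in lt_inv; [|lra].
  replace (psi x * / (x - s) * (x - s)) with (psi x) in lt_inv by (field; lra); exact lt_inv.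
Qed.

Lemma log_derivative_le (X c : R) : X < 0 -> I + k < c -> 0 < psi X -> dpsi X <= c * psi X.
Proof.
  intros hX hc psiX_pos; apply Rnot_lt_le; intros slopeX.
  set (s := X - / (c - (I + k))).
  assert (hs : / (X - s) = c - (I + k)).
  { unfold s; replace (X - _) with (/ (c - (I + k))) by ring; apply Rinv_inv. }
  assert (hsX : s < X).
  { unfold s; assert (0 < / (c - (I + k))) by (apply Rinv_0_lt_compat; lra); lra. }
  assert (I_ge0 : 0 <= I) by (destruct (m_bounds X ltac:(lra)); lra).
  assert (dpsi_pos : forall x, x <= X -> 0 < dpsi x).
  { apply dpsi_pos_left; [lra | assumption | nra]. }
  assert (psi_s : 0 < psi s).
  { apply (pos_of_derive_pos_ex_RInt_gen psi dpsi X);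
      [intros y hy; apply psi_deriv; lra | exact dpsi_pos | exact psi_L2 | lra]. }
  (* psi' (x - s) > psi(s) > 0 on (s, X], but it tends to 0 as x -> s. *)
  assert (psi s <= dpsi s * (s - s)).
  { apply (continuous_ge_right (fun y => dpsi y * (y - s)) s X); [| exact hsX |].
    - apply (continuous_mult dpsi (fun y => y - s)).
      + exact (is_derive_continuous _ _ _ (dpsi_deriv s ltac:(lra))).
      + apply (continuous_minus (fun y => y) (fun _ => s));
          [apply continuous_id | apply continuous_const].
    - intros t ht.
      assert (psi s <= psi t).
      { apply (is_derive_nonneg_le psi dpsi); [lra | intros y hy; apply psi_deriv; lra |].
        intros y hy; left; apply dpsi_pos; lra. }
      assert (psi t < dpsi t * (t - s))
        by (apply (blowup_lower_bound X s); try lra; rewrite hs; nra).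
      lra. }
  lra.
Qed.

Lemma slope_at_0_le (gamma : R) : 0 < psi 0 -> dpsi 0 = gamma * psi 0 -> gamma <= I + k.
Proof.
  intros psi0_pos dpsi0; apply Rnot_lt_le; intros hgamma.
  destruct (exists_left_slope_gt psi dpsi ((gamma + (I + k)) / 2) psi_deriv psi0_pos)
    as [X [hX [psiX_pos slopeX]]]; [rewrite dpsi0; nra|].
  pose proof (log_derivative_le X ((gamma + (I + k)) / 2) hX ltac:(lra) psiX_pos); lra.
Qed.

End DecayingSolution.

Lemma continuous_clamp_left (V : R -> R) :
  (forall x, x <= 0 -> filterlim V (within (fun y => y <= 0) (locally x)) (locally (V x))) ->
  forall x, continuous (fun y => V (Rmin y 0)) x.
Proof.
  intros V_cont x.
  apply filterlim_comp with (G := within (fun y => y <= 0) (locally (Rmin x 0)));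
    [| apply V_cont, Rmin_r].
  intros P [eps Heps]; exists eps; intros y hy; apply Heps; [| apply Rmin_r].
  assert (Rabs (Rmin y 0 - Rmin x 0) <= Rabs (y - x)).
  { unfold Rmin; destruct (Rle_dec y 0), (Rle_dec x 0); unfold Rabs;
      repeat destruct Rcase_abs; lra. }
  change (Rabs (Rmin y 0 - Rmin x 0) < eps).
  change (Rabs (y - x) < eps) in hy; lra.
Qed.

Lemma nonsingular_exp_bound (V : R -> R) : nonsingular V ->
  exists K kappa x1, 0 <= K /\ 0 < kappa /\ x1 <= 0 /\
    forall x, x <= x1 -> V x <= K * exp (kappa * x).
Proof.
  intros [_ [[kappa [U [C [x0 [hkappa [_ HV]]]]]] _]].
  exists (Rabs U + Rabs C), kappa, (Rmin x0 0).
  split; [pose proof (Rabs_pos U); pose proof (Rabs_pos C); lra|].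
  split; [exact hkappa|]; split; [apply Rmin_r|].
  intros x hx.
  assert (x <= x0 /\ x <= 0) as [hx0 hx1]
    by (pose proof (Rmin_l x0 0); pose proof (Rmin_r x0 0); lra).
  specialize (HV x hx0); pose proof (Rle_abs (V x - exp (kappa * x) * U)).
  set (e := exp (kappa * x)) in *.
  assert (0 < e) by apply exp_pos.
  assert (e <= 1).
  { unfold e; rewrite <- exp_0.
    destruct (Rle_lt_or_eq_dec (kappa * x) 0 ltac:(nra)) as [h | ->];
      [left; apply exp_increasing, h | lra]. }
  pose proof (Rle_abs U); pose proof (Rle_abs C); pose proof (Rabs_pos C).
  assert (C * e <= Rabs C) by nra.
  assert (C * e * e <= Rabs C * e) by nra.
  nra.
Qed.

Lemma nonincreasing_bounded_lim_m_infty (m : R -> R) (B : R) :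
  (forall x y, x <= y <= 0 -> m y <= m x) -> (forall x, x <= 0 -> m x <= B) ->
  exists l, (forall x, x <= 0 -> m x <= l) /\ filterlim m (Rbar_locally m_infty) (locally l).
Proof.
  intros m_decr m_le.
  set (E := fun y => exists x, x <= 0 /\ y = m x).
  destruct (completeness E) as [l [ub_l lub_l]].
  - exists B; intros y [x [hx ->]]; apply m_le, hx.
  - exists (m 0), 0; split; [lra | reflexivity].
  assert (m_le_l : forall x, x <= 0 -> m x <= l) by (intros x hx; apply ub_l; exists x; auto).
  exists l; split; [exact m_le_l|].
  apply filterlim_locally; intros eps.
  assert (exists x, x <= 0 /\ l - eps < m x) as [x0 [hx0 Hx0]].
  { apply NNPP; intros Hn.
    assert (l <= l - eps) by (apply lub_l; intros y [x [hx ->]];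
      apply Rnot_lt_le; intros hlt; apply Hn; exists x; auto).
    pose proof (cond_pos eps); lra. }
  exists x0; intros x hx.
  assert (m x0 <= m x) by (apply m_decr; lra).
  assert (m x <= l) by (apply m_le_l; lra).
  change (Rabs (m x - l) < eps); rewrite Rabs_left1; lra.
Qed.

Lemma is_RInt_gen_m_infty_of_lim (f F : R -> R) (l : R) :
  (forall a, a < 0 -> is_RInt f a 0 (F a)) ->
  filterlim F (Rbar_locally m_infty) (locally l) ->
  is_RInt_gen f (Rbar_locally m_infty) (at_point 0) l.
Proof.
  intros F_int F_lim P HP.
  destruct (F_lim P HP) as [M HM].
  apply (Filter_prod _ _ _ (fun a => a < Rmin M 0) (fun b => b = 0)).
  - exists (Rmin M 0); auto.
  - reflexivity.
  - intros a b ha -> ; exists (F a); split.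
    + apply F_int; pose proof (Rmin_r M 0); simpl; lra.
    + apply HM; pose proof (Rmin_l M 0); lra.
Qed.

Lemma primitive_le_of_exp_bound (v m : R -> R) (K kappa x1 : R) :
  0 <= K -> 0 < kappa -> (forall x, is_derive m x (- v x)) ->
  (forall x, x <= x1 -> v x <= K * exp (kappa * x)) ->
  forall x, x <= x1 -> m x <= m x1 + K / kappa * exp (kappa * x1).
Proof.
  intros hK hkappa m_deriv v_le x hx.
  assert (0 <= K / kappa * exp (kappa * x))
    by (apply Rmult_le_pos; [apply Rdiv_le_0_compat | left; apply exp_pos]; lra).
  enough (m x + K / kappa * exp (kappa * x) <= m x1 + K / kappa * exp (kappa * x1)) by lra.
  apply (is_derive_nonneg_le (fun y => m y + K / kappa * exp (kappa * y))
           (fun y => - v y + K * exp (kappa * y))); [exact hx | |].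
  - intros y hy; apply (is_derive_plus m); [apply m_deriv|].
    auto_derive; [exact I | field; lra].
  - intros y hy; specialize (v_le y ltac:(lra)); lra.
Qed.

Lemma nonsingular_primitive (V : R -> R) :
  nonsingular V -> (forall x, x <= 0 -> 0 <= V x) ->
  exists m : R -> R, (forall x, is_derive m x (- V (Rmin x 0))) /\
    forall x, x <= 0 -> 0 <= m x <= RInt_gen V (Rbar_locally m_infty) (at_point 0).
Proof.
  intros HV V_ge0.
  set (V0 := fun y => V (Rmin y 0)).
  assert (V0_cont : forall x, continuous V0 x) by exact (continuous_clamp_left V (proj1 HV)).
  assert (V0_ge0 : forall x, 0 <= V0 x) by (intros x; apply V_ge0, Rmin_r).
  set (m := fun a => RInt V0 a 0).
  assert (m_int : forall a, is_RInt V0 a 0 (m a)).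
  { intros a; apply (RInt_correct (V := R_CompleteNormedModule)), ex_RInt_continuous.
    intros z _; apply V0_cont. }
  assert (m_deriv : forall x, is_derive m x (- V0 x)).
  { intros x; apply (is_derive_RInt' V0 m x 0); [apply filter_forall, m_int | apply V0_cont]. }
  assert (m_decr : forall x y, x <= y -> m y <= m x).
  { intros x y hxy.
    enough (- m x <= - m y) by lra.
    apply (is_derive_nonneg_le (fun z => - m z) V0); [exact hxy | | intros; apply V0_ge0].
    intros z _; rewrite <- (Ropp_involutive (V0 z)); apply (is_derive_opp m), m_deriv. }
  assert (m0 : m 0 = 0) by exact (RInt_point (V := R_CompleteNormedModule) 0 V0).
  destruct (nonsingular_exp_bound V HV) as [K [kappa [x1 [hK [hkappa [hx1 V_le]]]]]].
  assert (m_bounded : forall x, x <= 0 -> m x <= m x1 + K / kappa * exp (kappa * x1)).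
  { assert (0 <= K / kappa * exp (kappa * x1))
      by (apply Rmult_le_pos; [apply Rdiv_le_0_compat | left; apply exp_pos]; lra).
    intros x hx; destruct (Rle_or_lt x x1) as [h | h].
    - apply (primitive_le_of_exp_bound V0); auto.
      intros y hy; unfold V0; rewrite Rmin_left by lra; apply V_le, hy.
    - pose proof (m_decr x1 x ltac:(lra)); lra. }
  destruct (nonincreasing_bounded_lim_m_infty m _ (fun x y hxy => m_decr x y (proj1 hxy)) m_bounded)
    as [l [m_le_l m_lim]].
  assert (RInt_gen V (Rbar_locally m_infty) (at_point 0) = l) as ->.
  { apply is_RInt_gen_unique, (is_RInt_gen_m_infty_of_lim V m); [| exact m_lim].
    intros a ha; apply (is_RInt_ext V0); [| apply m_int].
    intros t ht; rewrite Rmin_left in ht by lra; rewrite Rmax_right in ht by lra.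
    unfold V0; rewrite Rmin_left by lra; reflexivity. }
  exists m; split; [exact m_deriv|].
  intros x hx; split; [rewrite <- m0; apply m_decr, hx | apply m_le_l, hx].
Qed.

Lemma robin_eigenfunction_pos_at_0 (V : R -> R) (gamma E : R) :
  robin_eigenvalue V gamma E -> ~ (forall gamma', robin_eigenvalue V gamma' E) ->
  exists psi dpsi : R -> R,
    (forall x, x <= 0 -> is_derive psi x (dpsi x)) /\
    (forall x, x < 0 -> is_derive dpsi x ((V x - E) * psi x)) /\
    dpsi 0 = gamma * psi 0 /\ 0 < psi 0 /\
    ex_RInt_gen (fun x => psi x ^ 2) (Rbar_locally m_infty) (at_point 0).
Proof.
  intros [psi [dpsi [psi_deriv [dpsi_deriv [bc [psi_L2 psi_nz]]]]]] not_all.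
  destruct (Rtotal_order (psi 0) 0) as [psi0_neg | [psi0_zero | psi0_pos]].
  - exists (fun x => - psi x), (fun x => - dpsi x).
    split; [intros x hx; apply (is_derive_opp psi), psi_deriv, hx|].
    split.
    { intros x hx; replace ((V x - E) * - psi x) with (- ((V x - E) * psi x)) by ring.
      apply (is_derive_opp dpsi), dpsi_deriv, hx. }
    split; [rewrite bc; ring|]; split; [lra|].
    apply (ex_RInt_gen_ext_eq (fun x => psi x ^ 2)); [| exact psi_L2].
    intros x; change (psi x ^ 2 = (- psi x) ^ 2); ring.
  - exfalso; apply not_all; intros gamma'.
    exists psi, dpsi; split; [exact psi_deriv|]; split; [exact dpsi_deriv|].
    split; [rewrite bc, psi0_zero; ring | split; assumption].
  - exists psi, dpsi; split; [|split; [|split; [|split]]]; assumption.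
Qed.

Lemma robin_eigenvalue_gamma_le (V m : R -> R) (I gamma E : R) :
  (forall x, x <= 0 -> 0 <= V x) ->
  (forall x, is_derive m x (- V (Rmin x 0))) ->
  (forall x, x <= 0 -> 0 <= m x <= I) ->
  E < 0 -> robin_eigenvalue V gamma E -> ~ (forall gamma', robin_eigenvalue V gamma' E) ->
  gamma <= I + sqrt (- E).
Proof.
  intros V_ge0 m_deriv m_bounds E_neg E_eig not_all.
  destruct (robin_eigenfunction_pos_at_0 V gamma E E_eig not_all)
    as [psi [dpsi [psi_deriv [dpsi_deriv [bc [psi0_pos psi_L2]]]]]].
  apply (slope_at_0_le (fun x => V (Rmin x 0)) m psi dpsi); auto.
  - intros x; apply V_ge0, Rmin_r.
  - apply sqrt_lt_R0; lra.
  - intros x hx; rewrite Rmin_left, pow2_sqrt by lra.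
    replace (V x + - E) with (V x - E) by ring; apply dpsi_deriv, hx.
Qed.

Lemma le_of_at_right_le (a l : R) (h : R -> R) :
  (forall x, a < x -> x <= h x) -> filterlim h (at_right a) (locally l) -> a <= l.
Proof.
  intros h_ge h_lim.
  apply (filterlim_le (F := at_right a) (fun x => x) h a l); [| | exact h_lim].
  - exists (mkposreal 1 Rlt_0_1); intros x _ hx; apply h_ge, hx.
  - intros P [eps HP]; exists eps; intros x hx _; apply HP, hx.
Qed.

Theorem proposition6 (V : R -> R) (gamma_c : R) (Egam : R -> R) :
  nonsingular V ->
  (forall x, x <= 0 -> 0 <= V x) ->
  0 < gamma_c ->
  (forall gamma, 0 < gamma ->
     ((exists E, E < 0 /\ robin_eigenvalue V gamma E) <-> gamma_c < gamma)) ->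
  (forall gamma, gamma_c < gamma ->
     Egam gamma < 0 /\ robin_eigenvalue V gamma (Egam gamma) /\
     (forall E, E < 0 -> robin_eigenvalue V gamma E -> E = Egam gamma)) ->
  filterlim Egam (at_right gamma_c) (locally 0) ->
  gamma_c <= RInt_gen V (Rbar_locally m_infty) (at_point 0).
Proof.
  intros HV V_ge0 gamma_c_pos eig_iff eig_Egam Egam_lim.
  destruct (nonsingular_primitive V HV V_ge0) as [m [m_deriv m_bounds]].
  set (I := RInt_gen V (Rbar_locally m_infty) (at_point 0)) in *.
  apply (le_of_at_right_le gamma_c I (fun gamma => I + sqrt (- Egam gamma))).
  - intros gamma hgamma.
    destruct (eig_Egam gamma hgamma) as [E_neg [E_eig _]].
    apply (robin_eigenvalue_gamma_le V m); auto.
    (* An eigenfunction vanishing at 0 would be one for every gamma, e.g. gamma_c / 2. *)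
    intros E_eig_all.
    assert (gamma_c < gamma_c / 2) by (apply eig_iff; [lra | exists (Egam gamma); auto]).
    lra.
  - assert (sqrt_cont : continuous (fun e => I + sqrt (- e)) 0).
    { apply (continuous_plus (fun _ => I) (fun e => sqrt (- e))); [apply continuous_const|].
      apply continuous_sqrt_comp, (continuous_opp (V := R_NormedModule) (fun e => e)).
      apply continuous_id. }
    unfold continuous in sqrt_cont; rewrite Ropp_0, sqrt_0, Rplus_0_r in sqrt_cont.
    exact (filterlim_comp _ _ _ Egam _ _ _ _ Egam_lim sqrt_cont).
Qed.
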